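(* The algebra $\mathcal O_q$ defined in the context is generated by $\mathcal W_0$, $\mathcal W_1$, $\{\tilde{\mathcal G}_{k+1}\}_{k\in\mathbb N}$.
   Context: All algebras are associative and unital over a field $\mathbb F$; $q\in\mathbb F$ is nonzero and not a root of unity. For elements $X,Y$ of an algebra, $[X,Y]=XY-YX$ and $[X,Y]_q=qXY-q^{-1}YX$. Let $\rho=-(q^2-q^{-2})^2$. The algebra $\mathcal O_q$ is defined by generators $\mathcal W_{-k},\mathcal W_{k+1},\mathcal G_{k+1},\tilde{\mathcal G}_{k+1}$ ($k\in\mathbb N$) and the following relations for all $k,\ell\in\mathbb N$: $[\mathcal W_0,\mathcal W_{k+1}]=[\mathcal W_{-k},\mathcal W_1]=(\tilde{\mathcal G}_{k+1}-\mathcal G_{k+1})/(q+q^{-1})$; $[\mathcal W_0,\mathcal G_{k+1}]_q=[\tilde{\mathcal G}_{k+1},\mathcal W_0]_q=\rho\mathcal W_{-k-1}-\rho\mathcal W_{k+1}$; $[\mathcal G_{k+1},\mathcal W_1]_q=[\mathcal W_1,\tilde{\mathcal G}_{k+1}]_q=\rho\mathcal W_{k+2}-\rho\mathcal W_{-k}$; $[\mathcal W_{-k},\mathcal W_{-\ell}]=0$, $[\mathcal W_{k+1},\mathcal W_{\ell+1}]=0$; $[\mathcal W_{-k},\mathcal W_{\ell+1}]+[\mathcal W_{k+1},\mathcal W_{-\ell}]=0$; $[\mathcal W_{-k},\mathcal G_{\ell+1}]+[\mathcal G_{k+1},\mathcal W_{-\ell}]=0$; $[\mathcal W_{-k},\tilde{\mathcal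 G}_{\ell+1}]+[\tilde{\mathcal G}_{k+1},\mathcal W_{-\ell}]=0$; $[\mathcal W_{k+1},\mathcal G_{\ell+1}]+[\mathcal G_{k+1},\mathcal W_{\ell+1}]=0$; $[\mathcal W_{k+1},\tilde{\mathcal G}_{\ell+1}]+[\tilde{\mathcal G}_{k+1},\mathcal W_{\ell+1}]=0$; $[\mathcal G_{k+1},\mathcal G_{\ell+1}]=0$, $[\tilde{\mathcal G}_{k+1},\tilde{\mathcal G}_{\ell+1}]=0$; $[\tilde{\mathcal G}_{k+1},\mathcal G_{\ell+1}]+[\mathcal G_{k+1},\tilde{\mathcal G}_{\ell+1}]=0$. *)

From HB Require Import structures.
From mathcomp Require Import all_boot all_order all_algebra.
Set Implicit Arguments. Unset Strict Implicit. Unset Printing Implicit Defensive.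
Import GRing.Theory.
Local Open Scope ring_scope.

Definition comm (A : nzRingType) (X Y : A) : A := X * Y - Y * X.

Definition qcomm (F : fieldType) (A : algType F) (q : F) (X Y : A) : A :=
  q *: (X * Y) - q^-1 *: (Y * X).

Definition rho (F : fieldType) (q : F) : F := - (q ^+ 2 - q ^- 2) ^+ 2.

Definition not_root_of_unity (F : fieldType) (q : F) : Prop :=
  q != 0 /\ forall n : nat, (0 < n)%N -> q ^+ n != 1.

Inductive subalg_gen (F : fieldType) (A : algType F) (S : A -> Prop) : A -> Prop :=
  | sg_in x : S x -> subalg_gen S x
  | sg_scalar (c : F) : subalg_gen S (c%:A)
  | sg_scale (c : F) x : subalg_gen S x -> subalg_gen S (c *: x)
  | sg_add x y : subalg_gen S x -> subalg_gen S y -> subalg_gen S (x + y)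
  | sg_mul x y : subalg_gen S x -> subalg_gen S y -> subalg_gen S (x * y).

(* Elements Wm k = W_{-k}, Wp k = W_{k+1}, G k = G_{k+1}, Gt k = ~G_{k+1}
   (k : nat) of an F-algebra A satisfy the defining relations of O_q. *)
Definition Oq_relations (F : fieldType) (A : algType F) (q : F)
    (Wm Wp G Gt : nat -> A) : Prop :=
  [/\ forall k : nat,
        comm (Wm 0%N) (Wp k) = (q + q^-1)^-1 *: (Gt k - G k) /\
        comm (Wm k) (Wp 0%N) = (q + q^-1)^-1 *: (Gt k - G k),
      forall k : nat,
        qcomm q (Wm 0%N) (G k) = rho q *: Wm k.+1 - rho q *: Wp k /\
        qcomm q (Gt k) (Wm 0%N) = rho q *: Wm k.+1 - rho q *: Wp k,
      forall k : nat,
        qcomm q (G k) (Wp 0%N) = rho q *: Wp k.+1 - rho q *: Wm k /\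
        qcomm q (Wp 0%N) (Gt k) = rho q *: Wp k.+1 - rho q *: Wm k,
      forall k l : nat,
        [/\ comm (Wm k) (Wm l) = 0, comm (Wp k) (Wp l) = 0,
            comm (Wm k) (Wp l) + comm (Wp k) (Wm l) = 0,
            comm (Wm k) (G l) + comm (G k) (Wm l) = 0 &
            comm (Wm k) (Gt l) + comm (Gt k) (Wm l) = 0] &
      forall k l : nat,
        [/\ comm (Wp k) (G l) + comm (G k) (Wp l) = 0,
            comm (Wp k) (Gt l) + comm (Gt k) (Wp l) = 0,
            comm (G k) (G l) = 0, comm (Gt k) (Gt l) = 0 &
            comm (Gt k) (G l) + comm (G k) (Gt l) = 0]].

From HB Require Import structures.
From mathcomp Require Import all_boot all_order all_algebra.
Set Implicit Arguments. Unset Strict Implicit. Unset Printing Implicit Defensive.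
Local Open Scope ring_scope.
Import GRing.Theory.

(* Since [rho] is invertible, the q-commutator relations with the tilde
   generators solve for [W_{-k-1}] and [W_{k+2}] in terms of [W_0], [W_1],
   [~G_{k+1}] and [W_k], [W_{-k}]; by induction all [W]'s are generated.
   Since [q + q^-1] is invertible, the first relation then expresses
   [G_{k+1}] through [~G_{k+1}] and the commutator [[W_0, W_{k+1}]]. *)

Section SubalgGenClosure.
Variables (F : fieldType) (A : algType F) (S : A -> Prop).

Lemma subalg_genB x y :
  subalg_gen S x -> subalg_gen S y -> subalg_gen S (x - y).
Proof.
move=> Sx Sy; rewrite -scaleN1r.
by apply: sg_add => //; apply: sg_scale.
Qed.

Lemma subalg_gen_comm x y :
  subalg_gen S x -> subalg_gen S y -> subalg_gen S (comm x y).
Proof. by move=> Sx Sy; apply: subalg_genB; apply: sg_mul. Qed.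

Lemma subalg_gen_qcomm (q : F) x y :
  subalg_gen S x -> subalg_gen S y -> subalg_gen S (qcomm q x y).
Proof. by move=> Sx Sy; apply: subalg_genB; apply: sg_scale; apply: sg_mul. Qed.

End SubalgGenClosure.

Section ParameterUnits.
Variables (F : fieldType) (q : F).
Hypotheses (q_neq0 : q != 0) (q4_neq1 : q ^+ 4 != 1).

Lemma expr2_subV_neq0 : q ^+ 2 - q ^- 2 != 0.
Proof.
have -> : q ^+ 2 - q ^- 2 = q ^- 2 * (q ^+ 4 - 1).
  by rewrite mulrBr mulr1 (exprD q 2 2) mulrA mulVf ?mul1r ?expf_neq0.
by rewrite mulf_neq0 ?invr_eq0 ?expf_neq0 // subr_eq0.
Qed.

Lemma rho_neq0 : rho q != 0.
Proof. by rewrite /rho oppr_eq0 expf_neq0 // expr2_subV_neq0. Qed.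

Lemma addrV_neq0 : q + q^-1 != 0.
Proof.
have : (q - q^-1) * (q + q^-1) != 0.
  by rewrite -subr_sqr exprVn expr2_subV_neq0.
by apply: contra => /eqP->; rewrite mulr0.
Qed.

End ParameterUnits.

Section OqRecursion.
Variables (F : fieldType) (q : F) (A : algType F) (Wm Wp G Gt : nat -> A).
Hypotheses (q_nroot : not_root_of_unity q) (rel : Oq_relations q Wm Wp G Gt).

Let q_neq0 : q != 0. Proof. by case: q_nroot. Qed.
Let q4_neq1 : q ^+ 4 != 1. Proof. by case: q_nroot => _; apply. Qed.

Lemma Oq_WmS k :
  Wm k.+1 = (rho q)^-1 *: (qcomm q (Gt k) (Wm 0%N) + rho q *: Wp k).
Proof.
case: rel => _ relG _ _ _; rewrite (proj2 (relG k)) subrK.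
by rewrite scalerA mulVf ?scale1r ?rho_neq0.
Qed.

Lemma Oq_WpS k :
  Wp k.+1 = (rho q)^-1 *: (qcomm q (Wp 0%N) (Gt k) + rho q *: Wm k).
Proof.
case: rel => _ _ relG _ _; rewrite (proj2 (relG k)) subrK.
by rewrite scalerA mulVf ?scale1r ?rho_neq0.
Qed.

Lemma Oq_G k : G k = Gt k - (q + q^-1) *: comm (Wm 0%N) (Wp k).
Proof.
case: rel => relW _ _ _ _; rewrite (proj1 (relW k)).
by rewrite scalerA mulfV ?addrV_neq0 // scale1r opprB addrC subrK.
Qed.

Variable S : A -> Prop.
Hypotheses (S_Wm0 : S (Wm 0%N)) (S_Wp0 : S (Wp 0%N)) (S_Gt : forall k, S (Gt k)).

Lemma Oq_W_subalg_gen k : subalg_gen S (Wm k) /\ subalg_gen S (Wp k).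
Proof.
elim: k => [|k [genWm genWp]]; first by split; apply: sg_in.
rewrite Oq_WmS Oq_WpS; split; apply: sg_scale; apply: sg_add;
  by [apply: subalg_gen_qcomm => //; apply: sg_in | apply: sg_scale].
Qed.

Lemma Oq_G_subalg_gen k : subalg_gen S (G k).
Proof.
rewrite Oq_G; apply: subalg_genB; first exact: sg_in.
by apply: sg_scale; apply: subalg_gen_comm; [apply: sg_in | case: (Oq_W_subalg_gen k)].
Qed.

End OqRecursion.

Theorem lemma5p1 (F : fieldType) (q : F) (A : algType F)
    (Wm Wp G Gt : nat -> A) :
  not_root_of_unity q ->
  Oq_relations q Wm Wp G Gt ->
  let S := fun x : A => x = Wm 0%N \/ x = Wp 0%N \/ exists k : nat, x = Gt k in
  forall k : nat,
    [/\ subalg_gen S (Wm k), subalg_gen S (Wp k),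
        subalg_gen S (G k) & subalg_gen S (Gt k)].
Proof.
move=> q_nroot rel S k.
have S_Wm0 : S (Wm 0%N) by left.
have S_Wp0 : S (Wp 0%N) by right; left.
have S_Gt l : S (Gt l) by right; right; exists l.
have [genWm genWp] := Oq_W_subalg_gen q_nroot rel S_Wm0 S_Wp0 S_Gt k.
split=> //; first exact: (Oq_G_subalg_gen q_nroot rel S_Wm0 S_Wp0 S_Gt).
exact: sg_in.
Qed.
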